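(* For $\eta>0$ and $x,y\in\mathbf{R}^3$ let $$\mathcal{R}_0(\eta;x,y)=\frac{1}{1+2\eta^2}\cdot\frac{e^{i\eta|x-y|}-e^{-i\eta|x-y|}}{4\pi|x-y|}.$$ Then for $t>1$, $$\sup_{x,y\in\mathbf{R}^3}\Big|\int_0^\infty e^{-it(\eta^4+\eta^2)}\mathcal{R}_0(\eta;x,y)(4\eta^3+2\eta)\,d\eta\Big|\lesssim |t|^{-3/2},$$ and for $0<t\le1$ the same supremum is $\lesssim|t|^{-3/4}$.
   Context: $\mathcal{R}_0(\eta;x,y)=R_0^+(\lambda;x,y)-R_0^-(\lambda;x,y)$ with $\lambda=\eta^4+\eta^2$, where $R_0^\pm(\lambda)=\lim_{\epsilon\downarrow0}(\Delta^2-\Delta-(\lambda\pm i\epsilon))^{-1}$ on $\mathbf{R}^3$ has kernel $R_0^\pm(\lambda;x,y)=\frac{1}{1+2\eta^2}\Big(\frac{e^{\pm i\eta|x-y|}}{4\pi|x-y|}-\frac{e^{-\sqrt{1+\eta^2}|x-y|}}{4\pi|x-y|}\Big)$, $\eta=(\sqrt{1/4+\lambda}-1/2)^{1/2}$. The integral over $(0,\infty)$ is understood as an (improper) oscillatory integral. *)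

From Stdlib Require Import Reals.
From Coquelicot Require Import Coquelicot.
Open Scope R_scope.

Definition R3 : Type := (R * R * R)%type.

Definition dist3 (x y : R3) : R :=
  let '(x1, x2, x3) := x in
  let '(y1, y2, y3) := y in
  sqrt ((x1 - y1)^2 + (x2 - y2)^2 + (x3 - y3)^2).

Definition cexpi (theta : R) : C := (cos theta, sin theta).

Definition R0ker (eta : R) (x y : R3) : C :=
  let r := dist3 x y in
  Cmult (RtoC (/ (1 + 2 * eta ^ 2)))
        (Cdiv (Cminus (cexpi (eta * r)) (cexpi (- (eta * r))))
              (RtoC (4 * PI * r))).

Definition integrand (t : R) (x y : R3) (eta : R) : C :=
  Cmult (cexpi (- (t * (eta ^ 4 + eta ^ 2))))
        (Cmult (R0ker eta x y) (RtoC (4 * eta ^ 3 + 2 * eta))).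

Definition improper_integral_0_infty (f : R -> C) (l : C) : Prop :=
  is_RInt_gen (V := C_R_CompleteNormedModule) f (at_point 0) (Rbar_locally p_infty) l.

(* Writing [r = |x - y|], the integrand equals [i e^{-it(e^4+e^2)} e sin (e r) / (pi r)], so it
   suffices to bound the real integrals [I = int_0^oo cos (t (e^4 + e^2) + th) e sin (e r) de]
   by [C r t^(-3/2)] and [C r t^(-3/4)], uniformly in the phase shift [th].  Integrating by
   parts against the phase [Phi] turns [I] into [-(1/t) int_0^oo sin Phi A'] with
   [A e = sin (e r) / (4 e^2 + 2)]; this remainder is [O(r / e^2)], whence convergence.
   For large [t], [sin Phi A'] splits into oscillations with quartic phases ([Phi'' >= 2 t])
   against amplitudes of variation [O(1)] and [O(r)], and the van der Corput lemma gives
   [O(r / sqrt t)] for the remainder.  For small [t], split at [e0 = t^(-1/4)]: the integrand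
   is [O(r e^2)] below [e0], and the boundary term and the tail of the remainder are
   [O(r / (t e0)) = O(r e0^3)] above it. *)

From Stdlib Require Import Reals Lra Psatz.
From Coquelicot Require Import Coquelicot.
Open Scope R_scope.

Ltac continuous_by_derive :=
  apply (ex_derive_continuous (K := R_AbsRing) (V := R_NormedModule)); auto_derive.

Section RealIntegrals.
Implicit Types (f g m F : R -> R) (a b c x : R).

Lemma continuous_Rmult f g x :
  continuous f x -> continuous g x -> continuous (fun y => f y * g y) x.
Proof. intros; apply (continuous_mult (K := R_AbsRing)); auto. Qed.

Lemma continuous_of_is_derive F f x : is_derive F x (f x) -> continuous F x.
Proof.
  intros H; apply (ex_derive_continuous (K := R_AbsRing) (V := R_NormedModule)).
  eexists; eauto.
Qed.

Lemma Derive_of_is_derive f x l : is_derive f x l -> Derive (fun y : R => f y) x = l.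
Proof. apply is_derive_unique. Qed.

Lemma ex_RInt_continuous_on f a b :
  a <= b -> (forall x, a <= x <= b -> continuous f x) -> ex_RInt f a b.
Proof.
  intros Hab Hf; apply (ex_RInt_continuous (V := R_CompleteNormedModule)).
  rewrite Rmin_left, Rmax_right by lra; auto.
Qed.

Lemma ex_RInt_continuous_R f a b : (forall x, continuous f x) -> ex_RInt f a b.
Proof. intros Hf; apply (ex_RInt_continuous (V := R_CompleteNormedModule)); auto. Qed.

(* [RInt] identities stated at type [R] rather than at the carrier of
   [R_CompleteNormedModule], so that [rewrite], [ring] and [lra] apply to the results. *)
Lemma RInt_antiderivative F f a b : a <= b ->
  (forall x, a <= x <= b -> is_derive F x (f x)) ->
  (forall x, a <= x <= b -> continuous f x) ->
  @eq R (RInt f a b) (F b - F a).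
Proof.
  intros Hab HD HC; apply (is_RInt_unique (V := R_CompleteNormedModule)).
  apply (is_RInt_derive (V := R_CompleteNormedModule));
    rewrite Rmin_left, Rmax_right by lra; auto.
Qed.

Lemma RInt_Rplus f g a b : ex_RInt f a b -> ex_RInt g a b ->
  @eq R (RInt (fun x => f x + g x) a b) (RInt f a b + RInt g a b).
Proof. intros; apply (RInt_plus (V := R_CompleteNormedModule)); auto. Qed.

Lemma RInt_Rminus f g a b : ex_RInt f a b -> ex_RInt g a b ->
  @eq R (RInt (fun x => f x - g x) a b) (RInt f a b - RInt g a b).
Proof. intros; apply (RInt_minus (V := R_CompleteNormedModule)); auto. Qed.

Lemma RInt_Rmult_l f a b c : ex_RInt f a b ->
  @eq R (RInt (fun x => c * f x) a b) (c * RInt f a b).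
Proof. intros; apply (RInt_scal (V := R_CompleteNormedModule)); auto. Qed.

Lemma RInt_Chasles_R f a b c : ex_RInt f a b -> ex_RInt f b c ->
  @eq R (RInt f a b + RInt f b c) (RInt f a c).
Proof. intros; apply (RInt_Chasles (V := R_CompleteNormedModule)); auto. Qed.

Lemma abs_RInt_le_RInt f m a b : a <= b -> ex_RInt f a b -> ex_RInt m a b ->
  (forall x, a <= x <= b -> Rabs (f x) <= m x) -> Rabs (RInt f a b) <= RInt m a b.
Proof.
  intros Hab Hf Hm H; eapply Rle_trans; [apply abs_RInt_le; auto |].
  apply RInt_le; auto.
  - apply (ex_RInt_norm f); auto.
  - intros; apply H; lra.
Qed.

End RealIntegrals.

Lemma increment_ge_of_derive_ge (f df : R -> R) a b lam x y :
  (forall z, is_derive f z (df z)) -> (forall z, a <= z <= b -> lam <= df z) ->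
  a <= x <= y -> y <= b -> lam * (y - x) <= f y - f x.
Proof.
  intros Hf Hdf Hxy Hyb.
  destruct (Req_dec x y) as [-> | Hne]; [lra |].
  destruct (MVT_gen f x y df) as [c [Hc ->]].
  - intros z _; apply Hf.
  - intros z _; apply continuity_pt_filterlim, (continuous_of_is_derive f df), Hf.
  - rewrite Rmin_left, Rmax_right in Hc by lra.
    assert (lam <= df c) by (apply Hdf; lra); nra.
Qed.

Lemma sqrt_inv_pos lam : 0 < lam -> 0 < / sqrt lam /\ lam * / sqrt lam = sqrt lam.
Proof.
  intros H; assert (0 < sqrt lam) by (apply sqrt_lt_R0; auto).
  split; [apply Rinv_0_lt_compat; auto |].
  rewrite <- (sqrt_sqrt lam) at 1 by lra; field; lra.
Qed.

Lemma Rabs_sin_le x : Rabs (sin x) <= Rabs x.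
Proof.
  destruct (MVT_gen sin 0 x cos) as [c [_ E]].
  - intros; apply is_derive_sin.
  - intros; apply continuity_pt_filterlim, (continuous_of_is_derive sin cos), is_derive_sin.
  - rewrite sin_0, !Rminus_0_r in E; rewrite E, Rabs_mult.
    assert (Rabs (cos c) <= 1) by apply Rabs_le, COS_bound.
    assert (0 <= Rabs x) by apply Rabs_pos; nra.
Qed.

Lemma Rabs_sin_mult_le e r : 0 <= e -> 0 <= r -> Rabs (sin (e * r)) <= e * r.
Proof.
  intros; eapply Rle_trans; [apply Rabs_sin_le |]; rewrite Rabs_right; nra.
Qed.

Lemma Rabs_div_le num den N d : Rabs num <= N -> 0 < d -> d <= den -> Rabs (num / den) <= N / d.
Proof.
  intros Hn Hd Hden; unfold Rdiv; rewrite Rabs_mult, Rabs_inv, (Rabs_right den) by lra.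
  assert (0 <= Rabs num) by apply Rabs_pos.
  assert (/ den <= / d) by (apply Rinv_le_contravar; lra).
  assert (0 < / den) by (apply Rinv_0_lt_compat; lra).
  apply Rmult_le_compat; lra.
Qed.

Lemma is_derive_reflect (f df : R -> R) y :
  is_derive f (- y) (df (- y)) -> is_derive (fun z => f (- z)) y (- df (- y)).
Proof.
  intros Hf.
  assert (Hopp : is_derive (fun z : R => - z) y (-1)) by (auto_derive; auto; ring).
  replace (- df (- y)) with (scal (-1) (df (- y))) by (cbn; unfold mult; cbn; ring).
  apply (is_derive_comp f (fun z => - z)); auto.
Qed.

Lemma RInt_reflect (f : R -> R) a b :
  ex_RInt f a b -> RInt (fun y => f (- y)) (- b) (- a) = RInt f a b.
Proof.
  intros Hf; apply (is_RInt_unique (V := R_CompleteNormedModule)).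
  assert (H : is_RInt f (- - a) (- - b) (RInt f a b))
    by (rewrite !Ropp_involutive; apply (RInt_correct (V := R_CompleteNormedModule)); auto).
  apply (is_RInt_comp_opp f) , is_RInt_swap, is_RInt_opp in H.
  rewrite opp_opp in H; eapply is_RInt_ext; [| exact H].
  intros; apply opp_opp.
Qed.

(** * Van der Corput estimates *)

Section VanDerCorput.
Variables p p1 p2 : R -> R.
Hypothesis p_deriv : forall x, is_derive p x (p1 x).
Hypothesis p1_deriv : forall x, is_derive p1 x (p2 x).
Hypothesis p2_cont : forall x, continuous p2 x.

Let p_cont x : continuous p x := continuous_of_is_derive p p1 x (p_deriv x).
Let p1_cont x : continuous p1 x := continuous_of_is_derive p1 p2 x (p1_deriv x).

Let cos_p_cont x : continuous (fun y => cos (p y)) x.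
Proof. apply (continuous_comp p cos); auto; continuous_by_derive; auto. Qed.

Let sin_p_cont x : continuous (fun y => sin (p y)) x.
Proof. apply (continuous_comp p sin); auto; continuous_by_derive; auto. Qed.

Lemma RInt_cos_by_parts a b : a <= b -> (forall x, a <= x <= b -> p1 x <> 0) ->
  RInt (fun x => cos (p x)) a b
  = sin (p b) / p1 b - sin (p a) / p1 a + RInt (fun x => sin (p x) * (p2 x / (p1 x * p1 x))) a b.
Proof.
  intros Hab Hp1.
  assert (Hcont : forall x, a <= x <= b ->
                    continuous (fun y => sin (p y) * (p2 y / (p1 y * p1 y))) x).
  { intros x Hx; repeat apply continuous_Rmult; auto.
    apply continuous_Rinv_comp; [apply continuous_Rmult; auto |].
    apply Rmult_integral_contrapositive; auto. }
  assert (H : RInt (fun x => cos (p x) - sin (p x) * (p2 x / (p1 x * p1 x))) a b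
              = sin (p b) / p1 b - sin (p a) / p1 a).
  { apply (RInt_antiderivative (fun x => sin (p x) / p1 x)); auto.
    - intros x Hx; specialize (Hp1 x Hx); auto_derive.
      + repeat split; try (eexists; eauto); auto.
      + rewrite (Derive_of_is_derive _ _ _ (p_deriv x)), (Derive_of_is_derive _ _ _ (p1_deriv x)).
        field; auto.
    - intros x Hx; apply (continuous_minus (V := R_NormedModule)); auto. }
  rewrite RInt_Rminus in H by (apply ex_RInt_continuous_on; auto); lra.
Qed.

Lemma van_der_corput_first_derivative a b d : a <= b -> 0 < d ->
  (forall x, a <= x <= b -> d <= p1 x) -> (forall x, a <= x <= b -> 0 <= p2 x) ->
  Rabs (RInt (fun x => cos (p x)) a b) <= 3 / d.
Proof.
  intros Hab Hd Hp1 Hp2.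
  rewrite RInt_cos_by_parts by (auto; intros x Hx; specialize (Hp1 x Hx); lra).
  set (m x := p2 x / (p1 x * p1 x)).
  change (RInt (fun x => sin (p x) * (p2 x / (p1 x * p1 x))) a b)
    with (RInt (fun x => sin (p x) * m x) a b).
  assert (Hm_pos : forall x, a <= x <= b -> 0 <= m x)
    by (intros x Hx; specialize (Hp1 x Hx); specialize (Hp2 x Hx); apply Rdiv_le_0_compat; nra).
  assert (Hm_cont : forall x, a <= x <= b -> continuous m x).
  { intros x Hx; specialize (Hp1 x Hx); apply continuous_Rmult; auto.
    apply continuous_Rinv_comp; [apply continuous_Rmult; auto | nra]. }
  assert (Hm : RInt m a b = / p1 a - / p1 b).
  { replace (/ p1 a - / p1 b) with (- / p1 b - - / p1 a) by ring.
    apply (RInt_antiderivative (fun x => - / p1 x)); auto.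
    intros x Hx; specialize (Hp1 x Hx); auto_derive.
    - split; [eexists; eauto | lra].
    - rewrite (Derive_of_is_derive _ _ _ (p1_deriv x)); unfold m; field; lra. }
  assert (Hsin : Rabs (RInt (fun x => sin (p x) * m x) a b) <= / p1 a - / p1 b).
  { rewrite <- Hm; apply abs_RInt_le_RInt; auto.
    - apply ex_RInt_continuous_on; auto; intros; apply continuous_Rmult; auto.
    - apply ex_RInt_continuous_on; auto.
    - intros x Hx; specialize (Hm_pos x Hx).
      rewrite Rabs_mult, (Rabs_right (m x)) by lra.
      assert (Rabs (sin (p x)) <= 1) by apply Rabs_le, SIN_bound; nra. }
  assert (Hend : forall x, a <= x <= b -> Rabs (sin (p x) / p1 x) <= 1 / d /\ 0 < / p1 x <= / d).
  { intros x Hx; specialize (Hp1 x Hx); split.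
    - apply Rabs_div_le; auto; apply Rabs_le, SIN_bound.
    - split; [apply Rinv_0_lt_compat | apply Rinv_le_contravar]; lra. }
  destruct (Hend a) as [Ha Ha']; [lra |]; destruct (Hend b) as [Hb Hb']; [lra |].
  eapply Rle_trans; [apply Rabs_triang |].
  eapply Rle_trans; [apply Rplus_le_compat_r, Rabs_triang |].
  rewrite Rabs_Ropp; unfold Rdiv in *; lra.
Qed.

Lemma Rabs_RInt_cos_le_length u v : u <= v -> Rabs (RInt (fun x => cos (p x)) u v) <= v - u.
Proof.
  intros Huv; rewrite <- (Rmult_1_r (v - u)).
  apply abs_RInt_le_const; auto using ex_RInt_continuous_R.
  intros; apply Rabs_le, COS_bound.
Qed.

Lemma van_der_corput_nonneg_slope a b lam : a <= b -> 0 < lam ->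
  (forall x, a <= x <= b -> lam <= p2 x) -> 0 <= p1 a ->
  Rabs (RInt (fun x => cos (p x)) a b) <= 4 / sqrt lam.
Proof.
  intros Hab Hlam Hp2 Hp1a.
  destruct (sqrt_inv_pos lam Hlam) as [Hdelta Hlam_delta].
  set (delta := / sqrt lam) in *.
  destruct (Rle_dec b (a + delta)) as [Hb | Hb].
  { eapply Rle_trans; [apply Rabs_RInt_cos_le_length; lra |]; unfold Rdiv, delta in *; lra. }
  (* Past [a + 1/sqrt lam] the slope is at least [sqrt lam]. *)
  rewrite <- (RInt_Chasles_R _ a (a + delta) b) by (apply ex_RInt_continuous_R; auto).
  eapply Rle_trans; [apply Rabs_triang |].
  assert (Hfar : Rabs (RInt (fun x => cos (p x)) (a + delta) b) <= 3 / sqrt lam).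
  { apply van_der_corput_first_derivative; [lra | apply sqrt_lt_R0; auto | |].
    - intros x Hx.
      assert (lam * (x - a) <= p1 x - p1 a)
        by (apply (increment_ge_of_derive_ge p1 p2 a b); auto; lra).
      assert (lam * delta <= lam * (x - a)) by (apply Rmult_le_compat_l; lra).
      lra.
    - intros x Hx; assert (lam <= p2 x) by (apply Hp2; lra); lra. }
  assert (Rabs (RInt (fun x => cos (p x)) a (a + delta)) <= delta)
    by (eapply Rle_trans; [apply Rabs_RInt_cos_le_length |]; lra).
  unfold Rdiv, delta in *; lra.
Qed.

End VanDerCorput.

Section VanDerCorputSecondDerivative.
Variables p p1 p2 : R -> R.
Hypothesis p_deriv : forall x, is_derive p x (p1 x).
Hypothesis p1_deriv : forall x, is_derive p1 x (p2 x).
Hypothesis p2_cont : forall x, continuous p2 x.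

Let cos_p_cont x : continuous (fun y => cos (p y)) x.
Proof.
  apply (continuous_comp p cos); [apply (continuous_of_is_derive p p1), p_deriv |].
  continuous_by_derive; auto.
Qed.

Lemma van_der_corput_nonpos_slope a b lam : a <= b -> 0 < lam ->
  (forall x, a <= x <= b -> lam <= p2 x) -> p1 b <= 0 ->
  Rabs (RInt (fun x => cos (p x)) a b) <= 4 / sqrt lam.
Proof.
  intros Hab Hlam Hp2 Hp1b.
  rewrite <- RInt_reflect by (apply ex_RInt_continuous_R; auto).
  apply (van_der_corput_nonneg_slope (fun y => p (- y)) (fun y => - p1 (- y)) (fun y => p2 (- y)));
    rewrite ?Ropp_involutive; auto; try lra.
  - intros y; apply is_derive_reflect; auto.
  - intros y. replace (p2 (- y)) with (- - p2 (- y)) by ring.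
    apply (is_derive_opp (fun z => p1 (- z))), is_derive_reflect; auto.
  - intros y; apply (continuous_comp (fun z => - z) p2); auto; continuous_by_derive; auto.
  - intros y Hy; apply Hp2; lra.
Qed.

Lemma van_der_corput_second_derivative a b lam : a <= b -> 0 < lam ->
  (forall x, a <= x <= b -> lam <= p2 x) ->
  Rabs (RInt (fun x => cos (p x)) a b) <= 8 / sqrt lam.
Proof.
  intros Hab Hlam Hp2.
  assert (0 < / sqrt lam) by apply (sqrt_inv_pos lam Hlam).
  destruct (Rle_dec 0 (p1 a)) as [Ha | Ha].
  { eapply Rle_trans; [apply (van_der_corput_nonneg_slope p p1 p2) |]; auto; unfold Rdiv; lra. }
  destruct (Rle_dec (p1 b) 0) as [Hb | Hb].
  { eapply Rle_trans; [apply van_der_corput_nonpos_slope |]; auto; unfold Rdiv; lra. }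
  destruct (IVT_gen_consistent p1 a b 0) as [c [Hc Hp1c]].
  { intros x; apply (continuous_of_is_derive p1 p2), p1_deriv. }
  { rewrite Rmin_left, Rmax_right; lra. }
  rewrite Rmin_left, Rmax_right in Hc by lra.
  rewrite <- (RInt_Chasles_R _ a c b) by (apply ex_RInt_continuous_R; auto).
  eapply Rle_trans; [apply Rabs_triang |].
  assert (Rabs (RInt (fun x => cos (p x)) a c) <= 4 / sqrt lam)
    by (apply van_der_corput_nonpos_slope; auto; try lra; intros; apply Hp2; lra).
  assert (Rabs (RInt (fun x => cos (p x)) c b) <= 4 / sqrt lam)
    by (apply (van_der_corput_nonneg_slope p p1 p2); auto; try lra; intros; apply Hp2; lra).
  unfold Rdiv in *; lra.
Qed.

Lemma van_der_corput_amplitude (g g1 : R -> R) a b lam : a <= b -> 0 < lam ->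
  (forall x, a <= x <= b -> lam <= p2 x) ->
  (forall x, is_derive g x (g1 x)) -> (forall x, continuous g1 x) ->
  Rabs (RInt (fun x => cos (p x) * g x) a b)
    <= 8 / sqrt lam * (Rabs (g b) + RInt (fun x => Rabs (g1 x)) a b).
Proof.
  intros Hab Hlam Hp2 Hg Hg1.
  set (K := 8 / sqrt lam).
  assert (HK : 0 <= K) by (destruct (sqrt_inv_pos lam Hlam); unfold K, Rdiv; lra).
  assert (g_cont : forall x, continuous g x) by (intros x; apply (continuous_of_is_derive g g1), Hg).
  set (G z := RInt (fun y => cos (p y)) a z).
  assert (G_deriv : forall x, is_derive G x (cos (p x))).
  { intros x; apply (is_derive_RInt (V := R_CompleteNormedModule) (fun y => cos (p y)) G a); auto.
    apply filter_forall; intros y; apply (RInt_correct (V := R_CompleteNormedModule)).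
    apply ex_RInt_continuous_R; auto. }
  assert (G_cont : forall x, continuous G x)
    by (intros x; apply (continuous_of_is_derive G (fun y => cos (p y))), G_deriv).
  assert (G_bound : forall x, a <= x <= b -> Rabs (G x) <= K)
    by (intros x Hx; apply van_der_corput_second_derivative; try lra; intros; apply Hp2; lra).
  assert (Hex : forall f h, (forall x, continuous f x) -> (forall x, continuous h x) ->
                            ex_RInt (fun x => f x * h x) a b)
    by (intros; apply ex_RInt_continuous_R; intros; apply continuous_Rmult; auto).
  assert (Hparts : RInt (fun x => cos (p x) * g x) a b
                   = G b * g b - RInt (fun x => G x * g1 x) a b).
  { assert (Hsum : RInt (fun x => cos (p x) * g x + G x * g1 x) a b = G b * g b - G a * g a).
    { apply (RInt_antiderivative (fun x => G x * g x)); auto.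
      - intros x _; apply (is_derive_mult (K := R_AbsRing)); auto; intros; apply Rmult_comm.
      - intros x _; apply (continuous_plus (V := R_NormedModule)); apply continuous_Rmult; auto. }
    rewrite RInt_Rplus in Hsum by auto.
    assert (G a = 0) by apply (RInt_point (V := R_CompleteNormedModule)).
    rewrite H, Rmult_0_l, Rminus_0_r in Hsum; lra. }
  assert (Hrem : Rabs (RInt (fun x => G x * g1 x) a b) <= K * RInt (fun x => Rabs (g1 x)) a b).
  { rewrite <- RInt_Rmult_l by (apply ex_RInt_continuous_R; intros; apply continuous_Rabs_comp; auto).
    apply abs_RInt_le_RInt; auto.
    - apply ex_RInt_continuous_R; intros; apply continuous_Rmult;
        [apply continuous_const | apply continuous_Rabs_comp; auto].
    - intros x Hx; rewrite Rabs_mult; apply Rmult_le_compat_r; [apply Rabs_pos | auto]. }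
  assert (Hend : Rabs (G b * g b) <= K * Rabs (g b)).
  { rewrite Rabs_mult; apply Rmult_le_compat_r; [apply Rabs_pos | apply G_bound; lra]. }
  rewrite Hparts; eapply Rle_trans; [apply Rabs_triang |]; rewrite Rabs_Ropp; lra.
Qed.

End VanDerCorputSecondDerivative.

Lemma Rabs_sub_le_of_filterlim (F : R -> R) L c b0 M :
  filterlim F (Rbar_locally p_infty) (locally L) ->
  (forall b, b0 <= b -> Rabs (F b - c) <= M) -> Rabs (L - c) <= M.
Proof.
  intros HF HM.
  apply (filterlim_le (F := Rbar_locally p_infty) (fun b => Rabs (F b - c)) (fun _ => M)
           (Rabs (L - c)) M).
  - exists b0; intros; apply HM; lra.
  - apply (filterlim_comp _ _ _ F (fun z => Rabs (z - c)) _ _ _ HF).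
    apply continuous_Rabs_comp, (continuous_minus (V := R_NormedModule));
      [apply continuous_id | apply continuous_const].
  - apply filterlim_const.
Qed.

Lemma filterlim_of_inverse_rate (F : R -> R) L c :
  (forall b, 0 < b -> Rabs (F b - L) <= c / b) ->
  filterlim F (Rbar_locally p_infty) (locally L).
Proof.
  intros HF P [eps HP].
  exists (Rabs c / eps); intros b Hb; apply HP.
  assert (0 <= Rabs c / eps) by (apply Rdiv_le_0_compat; [apply Rabs_pos | apply cond_pos]).
  assert (c / b < eps).
  { apply (Rmult_lt_reg_r b); [lra |]; unfold Rdiv; rewrite Rmult_assoc, Rinv_l by lra.
    apply Rle_lt_trans with (Rabs c); [rewrite Rmult_1_r; apply Rle_abs |].
    apply (Rmult_lt_reg_r (/ eps)); [apply Rinv_0_lt_compat, cond_pos |].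
    replace (eps * b * / eps) with b by (field; apply Rgt_not_eq, cond_pos); exact Hb. }
  pose proof (HF b ltac:(lra)).
  change (Rabs (F b - L) < eps); lra.
Qed.

Section InverseSquareTail.
Variables (H : R -> R) (K : R).
Hypothesis H_cont : forall x, continuous H x.
Hypothesis H_le : forall x, 0 < x -> Rabs (H x) <= K / x ^ 2.

Lemma Rabs_RInt_sub_le_inverse x y : 0 < x <= y -> Rabs (RInt H 0 y - RInt H 0 x) <= K / x.
Proof.
  intros Hxy.
  assert (0 <= K).
  { specialize (H_le x ltac:(lra)); pose proof (Rabs_pos (H x)).
    replace K with (K / x ^ 2 * x ^ 2) by (field; lra).
    apply Rmult_le_pos; [lra | apply pow2_ge_0]. }
  assert (Hm : forall z, x <= z <= y -> continuous (fun z => K / z ^ 2) z)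
    by (intros z Hz; continuous_by_derive; nra).
  assert (Hsplit := RInt_Chasles_R H 0 x y (ex_RInt_continuous_R _ _ _ H_cont)
                                           (ex_RInt_continuous_R _ _ _ H_cont)).
  replace (RInt H 0 y - RInt H 0 x) with (RInt H x y) by lra.
  eapply Rle_trans; [apply (abs_RInt_le_RInt H (fun z => K / z ^ 2)) |].
  - lra.
  - apply ex_RInt_continuous_R; auto.
  - apply ex_RInt_continuous_on; [lra | auto].
  - intros z Hz; apply H_le; lra.
  - rewrite (RInt_antiderivative (fun z => - K / z)); [| lra | | auto].
    + assert (0 <= K / y) by (apply Rdiv_le_0_compat; lra); unfold Rdiv in *; lra.
    + intros z Hz; auto_derive; [lra | field; lra].
Qed.

Lemma RInt_inverse_square_tail : exists L, forall x, 0 < x -> Rabs (RInt H 0 x - L) <= K / x.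
Proof.
  assert (Hcauchy : exists L, filterlim (fun x => RInt H 0 x) (Rbar_locally p_infty) (locally L)).
  { apply filterlim_locally_cauchy; intros eps.
    exists (fun x => Rmax 0 (K / eps) < x); split; [exists (Rmax 0 (K / eps)); auto |].
    assert (Hsmall : forall x y, Rmax 0 (K / eps) < x <= y ->
                       Rabs (RInt H 0 y - RInt H 0 x) < eps).
    { intros x y [Hx Hxy].
      pose proof (Rmax_l 0 (K / eps)); pose proof (Rmax_r 0 (K / eps)).
      eapply Rle_lt_trans; [apply Rabs_RInt_sub_le_inverse; lra |].
      apply (Rmult_lt_reg_r x); [lra |]; unfold Rdiv; rewrite Rmult_assoc, Rinv_l by lra.
      replace K with (K / eps * eps) by (field; apply Rgt_not_eq, cond_pos).
      pose proof (cond_pos eps); nra. }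
    intros u v Hu Hv; change (Rabs (RInt H 0 v - RInt H 0 u) < eps).
    destruct (Rle_or_lt u v); [| rewrite Rabs_minus_sym]; apply Hsmall; lra. }
  destruct Hcauchy as [L HL]; exists L; intros x Hx.
  rewrite Rabs_minus_sym; apply (Rabs_sub_le_of_filterlim _ _ _ x _ HL).
  intros y Hy; apply Rabs_RInt_sub_le_inverse; lra.
Qed.

End InverseSquareTail.

Lemma is_RInt_gen_of_filterlim (f : R -> R) a L : (forall b, ex_RInt f a b) ->
  filterlim (fun b => RInt f a b) (Rbar_locally p_infty) (locally L) ->
  is_RInt_gen f (at_point a) (Rbar_locally p_infty) L.
Proof.
  intros Hf HL P HP.
  apply Filter_prod with (fun x => x = a) (fun b => P (RInt f a b)); [reflexivity | apply HL, HP |].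
  intros x b -> Hb; exists (RInt f a b); split; auto.
  apply (RInt_correct (V := R_CompleteNormedModule)), Hf.
Qed.

Lemma is_RInt_gen_pair {U V : NormedModule R_AbsRing} (Fa Fb : (R -> Prop) -> Prop)
  {FFa : Filter Fa} {FFb : Filter Fb} (f : R -> U * V) lu lv :
  is_RInt_gen (fun x => fst (f x)) Fa Fb lu -> is_RInt_gen (fun x => snd (f x)) Fa Fb lv ->
  is_RInt_gen f Fa Fb (lu, lv).
Proof.
  intros Hu Hv P [eps HP].
  specialize (Hu (ball lu eps) (locally_ball lu eps)).
  specialize (Hv (ball lv eps) (locally_ball lv eps)).
  unfold filtermapi in Hu, Hv |- *; generalize (filter_and _ _ Hu Hv); apply filter_imp.
  intros [a b] [[yu [Hyu Bu]] [yv [Hyv Bv]]].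
  exists (yu, yv); split; [apply is_RInt_fct_extend_pair; auto |].
  apply HP; split; auto.
Qed.

(** * The oscillatory integral *)

Definition quartic_phase (t s c e : R) : R := t * (e ^ 4 + e ^ 2) + s * e + c.

Lemma RInt_cos_quartic_phase_le t s c (g g1 : R -> R) a b : 0 < t -> a <= b ->
  (forall x, is_derive g x (g1 x)) -> (forall x, continuous g1 x) ->
  Rabs (RInt (fun e => cos (quartic_phase t s c e) * g e) a b)
    <= 8 / sqrt (2 * t) * (Rabs (g b) + RInt (fun x => Rabs (g1 x)) a b).
Proof.
  intros Ht Hab Hg Hg1.
  apply (van_der_corput_amplitude (quartic_phase t s c)
           (fun e => t * (4 * e ^ 3 + 2 * e) + s) (fun e => t * (12 * e ^ 2 + 2)));
    auto; try lra.
  - intros x; unfold quartic_phase; auto_derive; auto; ring.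
  - intros x; auto_derive; auto; ring.
  - intros x; continuous_by_derive; auto.
  - intros x _; nra.
Qed.

Lemma osc_denom_pos e : 0 < 4 * e ^ 2 + 2.
Proof. nra. Qed.

(* With [Phi e = t (e^4 + e^2) + th] one has [e sin (e r) = Phi' e / t * osc_amplitude r e],
   which drives the integration by parts below. *)
Definition osc_integrand (t r th e : R) : R := cos (t * (e ^ 4 + e ^ 2) + th) * e * sin (e * r).
Definition osc_amplitude (r e : R) : R := sin (e * r) / (4 * e ^ 2 + 2).
Definition osc_amplitude_deriv (r e : R) : R :=
  r * cos (e * r) / (4 * e ^ 2 + 2) - 8 * e * sin (e * r) / (4 * e ^ 2 + 2) ^ 2.
Definition osc_boundary (t r th e : R) : R := sin (t * (e ^ 4 + e ^ 2) + th) * osc_amplitude r e / t.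
Definition osc_remainder (t r th e : R) : R :=
  sin (t * (e ^ 4 + e ^ 2) + th) * osc_amplitude_deriv r e.

Section OscillatoryIntegral.
Variables t r th : R.
Hypothesis t_pos : 0 < t.
Hypothesis r_pos : 0 < r.

Lemma osc_integrand_continuous x : continuous (osc_integrand t r th) x.
Proof. unfold osc_integrand; continuous_by_derive; auto. Qed.

Lemma osc_remainder_continuous x : continuous (osc_remainder t r th) x.
Proof.
  unfold osc_remainder, osc_amplitude_deriv; continuous_by_derive.
  pose proof (osc_denom_pos x); repeat split; nra.
Qed.

Lemma RInt_osc_integrand_by_parts a b : a <= b ->
  @eq R (RInt (osc_integrand t r th) a b)
  (osc_boundary t r th b - osc_boundary t r th a - / t * RInt (osc_remainder t r th) a b).
Proof.
  intros Hab.
  assert (Hrem := ex_RInt_continuous_R _ a b osc_remainder_continuous).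
  assert (Hosc := ex_RInt_continuous_R _ a b osc_integrand_continuous).
  assert (H : RInt (fun e => osc_integrand t r th e + / t * osc_remainder t r th e) a b
              = osc_boundary t r th b - osc_boundary t r th a).
  { apply RInt_antiderivative; auto.
    - intros e _; pose proof (osc_denom_pos e).
      unfold osc_boundary, osc_integrand, osc_remainder, osc_amplitude, osc_amplitude_deriv.
      auto_derive; [repeat split; nra |]. simpl; field; split; nra.
    - intros e _; apply (continuous_plus (V := R_NormedModule)); [apply osc_integrand_continuous |].
      apply continuous_Rmult; auto using continuous_const, osc_remainder_continuous. }
  rewrite RInt_Rplus, RInt_Rmult_l in H; auto.
  - lra.
  - apply ex_RInt_continuous_R; intros; apply continuous_Rmult;
      auto using continuous_const, osc_remainder_continuous.
Qed.

Lemma osc_boundary_0 : osc_boundary t r th 0 = 0.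
Proof. unfold osc_boundary, osc_amplitude; rewrite Rmult_0_l, sin_0; unfold Rdiv; ring. Qed.

Lemma Rabs_osc_integrand_le e : 0 <= e -> Rabs (osc_integrand t r th e) <= r * e ^ 2.
Proof.
  intros He; unfold osc_integrand; rewrite !Rabs_mult, (Rabs_right e) by lra.
  assert (Rabs (cos (t * (e ^ 4 + e ^ 2) + th)) <= 1) by apply Rabs_le, COS_bound.
  assert (Rabs (sin (e * r)) <= e * r) by (apply Rabs_sin_mult_le; lra).
  pose proof (Rabs_pos (sin (e * r))); pose proof (Rabs_pos (cos (t * (e ^ 4 + e ^ 2) + th))).
  assert (e * Rabs (sin (e * r)) <= e * (e * r)) by (apply Rmult_le_compat_l; lra).
  assert (0 <= e * Rabs (sin (e * r))) by nra.
  rewrite Rmult_assoc; nra.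
Qed.

Lemma Rabs_osc_remainder_le e : 0 < e -> Rabs (osc_remainder t r th e) <= 3 * r / 4 / e ^ 2.
Proof.
  intros He; unfold osc_remainder, osc_amplitude_deriv; rewrite Rabs_mult.
  assert (Hs : Rabs (sin (e * r)) <= e * r) by (apply Rabs_sin_mult_le; lra).
  assert (Hcos : Rabs (r * cos (e * r) / (4 * e ^ 2 + 2)) <= r / (4 * e ^ 2)).
  { apply Rabs_div_le; try nra; rewrite Rabs_mult, (Rabs_right r) by lra.
    assert (Rabs (cos (e * r)) <= 1) by apply Rabs_le, COS_bound; nra. }
  assert (Hsin : Rabs (8 * e * sin (e * r) / (4 * e ^ 2 + 2) ^ 2) <= 8 * e * (e * r) / (16 * e ^ 4)).
  { assert (0 < e ^ 2) by nra.
    apply Rabs_div_le; [| nra | nra].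
    rewrite Rabs_mult, (Rabs_right (8 * e)) by lra; apply Rmult_le_compat_l; lra. }
  assert (r / (4 * e ^ 2) + 8 * e * (e * r) / (16 * e ^ 4) = 3 * r / 4 / e ^ 2) by (field; lra).
  pose proof (Rabs_triang (r * cos (e * r) / (4 * e ^ 2 + 2))
                          (- (8 * e * sin (e * r) / (4 * e ^ 2 + 2) ^ 2))).
  rewrite Rabs_Ropp in *.
  assert (Rabs (sin (t * (e ^ 4 + e ^ 2) + th)) <= 1) by apply Rabs_le, SIN_bound.
  pose proof (Rabs_pos (sin (t * (e ^ 4 + e ^ 2) + th))).
  pose proof (Rabs_pos (r * cos (e * r) / (4 * e ^ 2 + 2) - 8 * e * sin (e * r) / (4 * e ^ 2 + 2) ^ 2)).
  unfold Rminus in *; nra.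
Qed.

Lemma Rabs_osc_boundary_le_inv e : 0 < e -> Rabs (osc_boundary t r th e) <= / (t * e).
Proof.
  intros He; unfold osc_boundary, osc_amplitude.
  replace (/ (t * e)) with (1 / (t * e)) by (field; lra).
  replace (sin (t * (e ^ 4 + e ^ 2) + th) * (sin (e * r) / (4 * e ^ 2 + 2)) / t)
    with (sin (t * (e ^ 4 + e ^ 2) + th) * sin (e * r) / (t * (4 * e ^ 2 + 2))) by (field; split; nra).
  apply Rabs_div_le; [| nra | apply Rmult_le_compat_l; nra].
  rewrite Rabs_mult.
  assert (Rabs (sin (t * (e ^ 4 + e ^ 2) + th)) <= 1) by apply Rabs_le, SIN_bound.
  assert (Rabs (sin (e * r)) <= 1) by apply Rabs_le, SIN_bound.
  pose proof (Rabs_pos (sin (e * r))); nra.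
Qed.

Lemma Rabs_osc_boundary_le e : 0 < e -> Rabs (osc_boundary t r th e) <= r / (4 * t * e).
Proof.
  intros He; unfold osc_boundary, osc_amplitude.
  replace (r / (4 * t * e)) with (e * r / (t * (4 * e ^ 2))) by (field; lra).
  replace (sin (t * (e ^ 4 + e ^ 2) + th) * (sin (e * r) / (4 * e ^ 2 + 2)) / t)
    with (sin (t * (e ^ 4 + e ^ 2) + th) * sin (e * r) / (t * (4 * e ^ 2 + 2))) by (field; split; nra).
  assert (0 < e ^ 2) by nra.
  apply Rabs_div_le; [| nra | apply Rmult_le_compat_l; nra].
  rewrite Rabs_mult.
  assert (Rabs (sin (t * (e ^ 4 + e ^ 2) + th)) <= 1) by apply Rabs_le, SIN_bound.
  assert (Rabs (sin (e * r)) <= e * r) by (apply Rabs_sin_mult_le; lra).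
  pose proof (Rabs_pos (sin (t * (e ^ 4 + e ^ 2) + th))); pose proof (Rabs_pos (sin (e * r))); nra.
Qed.

End OscillatoryIntegral.

Definition osc_weight (e : R) : R := / (4 * e ^ 2 + 2).
Definition osc_weight_deriv (e : R) : R := - (8 * e) / (4 * e ^ 2 + 2) ^ 2.
Definition osc_sin_weight (r e : R) : R := 8 * e * sin (e * r) / (4 * e ^ 2 + 2) ^ 2.
Definition osc_sin_weight_deriv (r e : R) : R :=
  8 * (sin (e * r) * (2 - 12 * e ^ 2) + e * r * cos (e * r) * (4 * e ^ 2 + 2)) / (4 * e ^ 2 + 2) ^ 3.

Lemma cos_sub_PI2 y : cos (y - PI / 2) = sin y.
Proof. rewrite cos_minus, cos_PI2, sin_PI2; ring. Qed.

(* [sin Phi cos (e r) = (sin (Phi + e r) + sin (Phi - e r)) / 2] splits the remainder into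
   quartic-phase oscillations against amplitudes of variation [O(1)] and [O(r)]. *)
Lemma osc_remainder_decomposition t r th e :
  osc_remainder t r th e
  = r / 2 * (cos (quartic_phase t r (th - PI / 2) e) * osc_weight e
             + cos (quartic_phase t (- r) (th - PI / 2) e) * osc_weight e)
    - cos (quartic_phase t 0 (th - PI / 2) e) * osc_sin_weight r e.
Proof.
  set (A := t * (e ^ 4 + e ^ 2) + th).
  replace (quartic_phase t r (th - PI / 2) e) with (A + e * r - PI / 2)
    by (unfold quartic_phase, A; ring).
  replace (quartic_phase t (- r) (th - PI / 2) e) with (A - e * r - PI / 2)
    by (unfold quartic_phase, A; ring).
  replace (quartic_phase t 0 (th - PI / 2) e) with (A - PI / 2) by (unfold quartic_phase, A; ring).
  rewrite !cos_sub_PI2, sin_plus, sin_minus.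
  unfold osc_remainder, osc_amplitude_deriv, osc_weight, osc_sin_weight; fold A.
  pose proof (osc_denom_pos e); field; lra.
Qed.

Lemma osc_weight_is_derive e : is_derive osc_weight e (osc_weight_deriv e).
Proof.
  unfold osc_weight, osc_weight_deriv; pose proof (osc_denom_pos e).
  auto_derive; [lra | field; lra].
Qed.

Lemma osc_weight_continuous e : continuous osc_weight e.
Proof. apply (continuous_of_is_derive _ osc_weight_deriv), osc_weight_is_derive. Qed.

Lemma osc_weight_deriv_continuous e : continuous osc_weight_deriv e.
Proof. unfold osc_weight_deriv; pose proof (osc_denom_pos e); continuous_by_derive; nra. Qed.

Lemma Rabs_osc_weight_le e : Rabs (osc_weight e) <= 1 / 2.
Proof.
  unfold osc_weight; pose proof (osc_denom_pos e).
  rewrite Rabs_right by (apply Rle_ge, Rlt_le, Rinv_0_lt_compat; lra).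
  unfold Rdiv; rewrite Rmult_1_l; apply Rinv_le_contravar; nra.
Qed.

Lemma osc_weight_variation_le b : 0 <= b -> RInt (fun e => Rabs (osc_weight_deriv e)) 0 b <= 1 / 2.
Proof.
  intros Hb.
  rewrite (RInt_ext _ (fun e => - osc_weight_deriv e)).
  - rewrite (RInt_antiderivative (fun e => - osc_weight e)); auto.
    + unfold osc_weight; pose proof (osc_denom_pos b).
      assert (0 < / (4 * b ^ 2 + 2)) by (apply Rinv_0_lt_compat; lra).
      replace (4 * 0 ^ 2 + 2) with 2 by ring; lra.
    + intros; apply (is_derive_opp osc_weight), osc_weight_is_derive.
    + intros; apply (continuous_opp (V := R_NormedModule)), osc_weight_deriv_continuous.
  - rewrite Rmin_left, Rmax_right by lra; intros x Hx; unfold osc_weight_deriv.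
    pose proof (osc_denom_pos x); rewrite Rabs_left1; [reflexivity |]; unfold Rdiv.
    assert (0 < / (4 * x ^ 2 + 2) ^ 2) by (apply Rinv_0_lt_compat; nra); nra.
Qed.

Lemma osc_sin_weight_is_derive r e : is_derive (osc_sin_weight r) e (osc_sin_weight_deriv r e).
Proof.
  unfold osc_sin_weight, osc_sin_weight_deriv; pose proof (osc_denom_pos e).
  auto_derive; [nra | field; lra].
Qed.

Lemma osc_sin_weight_continuous r e : continuous (osc_sin_weight r) e.
Proof. apply (continuous_of_is_derive _ (osc_sin_weight_deriv r)), osc_sin_weight_is_derive. Qed.

Lemma osc_sin_weight_deriv_continuous r e : continuous (osc_sin_weight_deriv r) e.
Proof. unfold osc_sin_weight_deriv; pose proof (osc_denom_pos e); continuous_by_derive; nra. Qed.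

Lemma Rabs_osc_sin_weight_le r e : 0 <= e -> 0 < r -> Rabs (osc_sin_weight r e) <= r / 2.
Proof.
  intros He Hr; unfold osc_sin_weight; pose proof (osc_denom_pos e).
  assert (Hnum : Rabs (8 * e * sin (e * r)) <= 8 * e * (e * r)).
  { rewrite Rabs_mult, (Rabs_right (8 * e)) by lra.
    apply Rmult_le_compat_l; [lra | apply Rabs_sin_mult_le; lra]. }
  eapply Rle_trans.
  - apply (Rabs_div_le _ _ _ ((4 * e ^ 2 + 2) ^ 2) Hnum); [apply pow_lt; lra | lra].
  - apply Rmult_le_reg_r with ((4 * e ^ 2 + 2) ^ 2); [apply pow_lt; lra |].
    replace (8 * e * (e * r) / (4 * e ^ 2 + 2) ^ 2 * (4 * e ^ 2 + 2) ^ 2) with (8 * e * (e * r))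
      by (field; lra).
    assert (0 <= r * e ^ 4) by (apply Rmult_le_pos; [lra | apply pow_le; lra]); nra.
Qed.

Lemma Rabs_osc_sin_weight_deriv_le r e : 0 <= e -> 0 < r ->
  Rabs (osc_sin_weight_deriv r e) <= 32 * r * e / (4 * e ^ 2 + 2) ^ 2.
Proof.
  intros He Hr; unfold osc_sin_weight_deriv; pose proof (osc_denom_pos e).
  replace (32 * r * e / (4 * e ^ 2 + 2) ^ 2)
    with (8 * (4 * (e * r) * (4 * e ^ 2 + 2)) / (4 * e ^ 2 + 2) ^ 3) by (field; lra).
  apply Rabs_div_le; try nra.
  rewrite Rabs_mult, (Rabs_right 8) by lra; apply Rmult_le_compat_l; [lra |].
  eapply Rle_trans; [apply Rabs_triang |].
  rewrite !Rabs_mult, (Rabs_right (4 * e ^ 2 + 2)), (Rabs_right e), (Rabs_right r) by lra.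
  assert (Hsin := Rabs_sin_mult_le e r He (Rlt_le _ _ Hr)).
  assert (Hpoly : Rabs (2 - 12 * e ^ 2) <= 3 * (4 * e ^ 2 + 2)) by (apply Rabs_le; nra).
  assert (Hcos : Rabs (cos (e * r)) <= 1) by apply Rabs_le, COS_bound.
  pose proof (Rabs_pos (sin (e * r))); pose proof (Rabs_pos (2 - 12 * e ^ 2));
    pose proof (Rabs_pos (cos (e * r))).
  assert (0 <= e * r) by nra.
  assert (Rabs (sin (e * r)) * Rabs (2 - 12 * e ^ 2) <= e * r * (3 * (4 * e ^ 2 + 2)))
    by (apply Rmult_le_compat; auto).
  assert (e * r * Rabs (cos (e * r)) * (4 * e ^ 2 + 2) <= e * r * 1 * (4 * e ^ 2 + 2))
    by (apply Rmult_le_compat_r; [lra | apply Rmult_le_compat_l; auto]).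
  nra.
Qed.

Lemma osc_sin_weight_variation_le r b : 0 <= b -> 0 < r ->
  RInt (fun e => Rabs (osc_sin_weight_deriv r e)) 0 b <= 2 * r.
Proof.
  intros Hb Hr.
  assert (Hcont : forall x, continuous (fun e => 32 * r * e / (4 * e ^ 2 + 2) ^ 2) x)
    by (intros x; pose proof (osc_denom_pos x); continuous_by_derive; nra).
  eapply Rle_trans.
  - apply RInt_le with (g := fun e => 32 * r * e / (4 * e ^ 2 + 2) ^ 2); auto.
    + apply ex_RInt_continuous_R; intros; apply continuous_Rabs_comp, osc_sin_weight_deriv_continuous.
    + apply ex_RInt_continuous_R; auto.
    + intros x Hx; apply Rabs_osc_sin_weight_deriv_le; lra.
  - rewrite (RInt_antiderivative (fun e => - 4 * r / (4 * e ^ 2 + 2))); auto.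
    + pose proof (osc_denom_pos b).
      assert (0 < 4 * r / (4 * b ^ 2 + 2)) by (apply Rdiv_lt_0_compat; lra).
      replace (4 * 0 ^ 2 + 2) with 2 by ring; unfold Rdiv in *; lra.
    + intros x _; pose proof (osc_denom_pos x); auto_derive; [lra | field; lra].
Qed.

Lemma ex_RInt_cos_quartic_phase_mult t s c (g : R -> R) a b : (forall x, continuous g x) ->
  ex_RInt (fun e => cos (quartic_phase t s c e) * g e) a b.
Proof.
  intros Hg; apply ex_RInt_continuous_R; intros x; apply continuous_Rmult; auto.
  unfold quartic_phase; continuous_by_derive; auto.
Qed.

Lemma Rabs_RInt_cos_quartic_phase_osc_weight_le t s c b : 0 < t -> 0 <= b ->
  Rabs (RInt (fun e => cos (quartic_phase t s c e) * osc_weight e) 0 b) <= 8 / sqrt (2 * t).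
Proof.
  intros Ht Hb.
  assert (0 <= 8 / sqrt (2 * t)) by (apply Rlt_le, Rdiv_lt_0_compat; [lra | apply sqrt_lt_R0; lra]).
  eapply Rle_trans.
  - apply (RInt_cos_quartic_phase_le t s c osc_weight osc_weight_deriv); auto;
      [apply osc_weight_is_derive | apply osc_weight_deriv_continuous].
  - pose proof (Rabs_osc_weight_le b); pose proof (osc_weight_variation_le b Hb); nra.
Qed.

Lemma Rabs_RInt_cos_quartic_phase_osc_sin_weight_le t r s c b : 0 < t -> 0 < r -> 0 <= b ->
  Rabs (RInt (fun e => cos (quartic_phase t s c e) * osc_sin_weight r e) 0 b)
    <= 8 / sqrt (2 * t) * (5 * r / 2).
Proof.
  intros Ht Hr Hb.
  assert (0 <= 8 / sqrt (2 * t)) by (apply Rlt_le, Rdiv_lt_0_compat; [lra | apply sqrt_lt_R0; lra]).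
  eapply Rle_trans.
  - apply (RInt_cos_quartic_phase_le t s c (osc_sin_weight r) (osc_sin_weight_deriv r)); auto;
      [apply osc_sin_weight_is_derive | apply osc_sin_weight_deriv_continuous].
  - pose proof (Rabs_osc_sin_weight_le r b Hb Hr); pose proof (osc_sin_weight_variation_le r b Hb Hr).
    nra.
Qed.

Lemma Rabs_RInt_osc_remainder_le t r th b : 0 < t -> 0 < r -> 0 <= b ->
  Rabs (RInt (osc_remainder t r th) 0 b) <= 28 * r / sqrt (2 * t).
Proof.
  intros Ht Hr Hb.
  set (c := th - PI / 2).
  set (I s g := RInt (fun e => cos (quartic_phase t s c e) * g e) 0 b).
  assert (Hw := osc_weight_continuous); assert (Hsw := osc_sin_weight_continuous r).
  rewrite (RInt_ext _ (fun e => r / 2 * (cos (quartic_phase t r c e) * osc_weight e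
                                         + cos (quartic_phase t (- r) c e) * osc_weight e)
                                - cos (quartic_phase t 0 c e) * osc_sin_weight r e))
    by (intros; apply osc_remainder_decomposition).
  rewrite RInt_Rminus, RInt_Rmult_l, RInt_Rplus; auto using ex_RInt_cos_quartic_phase_mult.
  - pose proof (Rabs_RInt_cos_quartic_phase_osc_weight_le t r c b Ht Hb).
    pose proof (Rabs_RInt_cos_quartic_phase_osc_weight_le t (- r) c b Ht Hb).
    pose proof (Rabs_RInt_cos_quartic_phase_osc_sin_weight_le t r 0 c b Ht Hr Hb).
    fold (I r osc_weight) (I (- r) osc_weight) (I 0 (osc_sin_weight r)) in *.
    replace (28 * r / sqrt (2 * t)) with (7 / 2 * r * (8 / sqrt (2 * t)))
      by (field; apply Rgt_not_eq, sqrt_lt_R0; lra).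
    set (K := 8 / sqrt (2 * t)) in *.
    assert (0 <= K) by (apply Rlt_le, Rdiv_lt_0_compat; [lra | apply sqrt_lt_R0; lra]).
    pose proof (Rabs_triang (I r osc_weight) (I (- r) osc_weight)).
    pose proof (Rabs_triang (r / 2 * (I r osc_weight + I (- r) osc_weight))
                            (- I 0 (osc_sin_weight r))).
    rewrite Rabs_Ropp, Rabs_mult, (Rabs_right (r / 2)) in * by lra.
    unfold Rminus; nra.
  - apply (ex_RInt_plus (V := R_CompleteNormedModule)); auto using ex_RInt_cos_quartic_phase_mult.
  - apply ex_RInt_continuous_R; intros x; apply continuous_Rmult; [apply continuous_const |].
    apply (continuous_plus (V := R_NormedModule)); apply continuous_Rmult; auto;
      unfold quartic_phase; continuous_by_derive; auto.
Qed.

Section OscillatoryLimit.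
Variables t r th : R.
Hypothesis t_pos : 0 < t.
Hypothesis r_pos : 0 < r.

Lemma osc_remainder_tail : exists LG, forall x, 0 < x ->
  Rabs (RInt (osc_remainder t r th) 0 x - LG) <= 3 * r / 4 / x.
Proof.
  apply RInt_inverse_square_tail; [apply osc_remainder_continuous |].
  intros; apply Rabs_osc_remainder_le; auto.
Qed.

Variable LG : R.
Hypothesis LG_tail : forall x, 0 < x -> Rabs (RInt (osc_remainder t r th) 0 x - LG) <= 3 * r / 4 / x.

Lemma RInt_osc_integrand_from_0 b : 0 <= b ->
  @eq R (RInt (osc_integrand t r th) 0 b)
    (osc_boundary t r th b - / t * RInt (osc_remainder t r th) 0 b).
Proof.
  intros Hb; rewrite (RInt_osc_integrand_by_parts t r th t_pos 0 b Hb), osc_boundary_0; ring.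
Qed.

Lemma osc_integral_filterlim :
  filterlim (fun b => RInt (osc_integrand t r th) 0 b) (Rbar_locally p_infty) (locally (- / t * LG)).
Proof.
  apply filterlim_of_inverse_rate with (c := / t + / t * (3 * r / 4)); intros b Hb.
  rewrite RInt_osc_integrand_from_0 by lra.
  replace (osc_boundary t r th b - / t * RInt (osc_remainder t r th) 0 b - - / t * LG)
    with (osc_boundary t r th b + - (/ t * (RInt (osc_remainder t r th) 0 b - LG))) by ring.
  assert (0 < / t) by (apply Rinv_0_lt_compat; lra).
  eapply Rle_trans; [apply Rabs_triang |].
  rewrite Rabs_Ropp, Rabs_mult, (Rabs_right (/ t)) by lra.
  pose proof (Rabs_osc_boundary_le_inv t r th t_pos b Hb).
  assert (/ t * Rabs (RInt (osc_remainder t r th) 0 b - LG) <= / t * (3 * r / 4 / b))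
    by (apply Rmult_le_compat_l; auto; lra).
  replace (/ (t * b)) with (/ t / b) in * by (field; lra).
  replace ((/ t + / t * (3 * r / 4)) / b) with (/ t / b + / t * (3 * r / 4 / b)) by (field; lra).
  lra.
Qed.

Lemma osc_integral_le_large_time : Rabs (- / t * LG) <= 28 * r / sqrt (2 * t) / t.
Proof.
  assert (HLG : Rabs LG <= 28 * r / sqrt (2 * t)).
  { rewrite <- (Rminus_0_r LG).
    apply (Rabs_sub_le_of_filterlim (fun b => RInt (osc_remainder t r th) 0 b) _ _ 0).
    - apply filterlim_of_inverse_rate with (c := 3 * r / 4); auto.
    - intros b Hb; rewrite Rminus_0_r; apply Rabs_RInt_osc_remainder_le; auto. }
  assert (0 < / t) by (apply Rinv_0_lt_compat; lra).
  rewrite Rabs_mult, Rabs_Ropp, (Rabs_right (/ t)) by lra.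
  unfold Rdiv at 2; rewrite Rmult_comm; apply Rmult_le_compat_r; lra.
Qed.

Lemma osc_integral_le_small_time e0 : 0 < e0 -> e0 ^ 4 * t = 1 ->
  Rabs (- / t * LG) <= 2 * r * e0 ^ 3.
Proof.
  intros He0 He0t.
  assert (Hinv_t : / t = e0 ^ 4) by (field_simplify_eq; [nra | lra]).
  set (G := RInt (osc_remainder t r th) 0 e0).
  assert (Hsplit : - / t * LG
                   = RInt (osc_integrand t r th) 0 e0 - osc_boundary t r th e0 - / t * (LG - G))
    by (rewrite RInt_osc_integrand_from_0 by lra; unfold G; ring).
  assert (Hnear : Rabs (RInt (osc_integrand t r th) 0 e0) <= r * e0 ^ 3 / 3).
  { eapply Rle_trans; [apply (abs_RInt_le_RInt _ (fun e => r * e ^ 2)) |].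
    - lra.
    - apply ex_RInt_continuous_R, osc_integrand_continuous.
    - apply ex_RInt_continuous_R; intros; continuous_by_derive; auto.
    - intros e He; apply Rabs_osc_integrand_le; lra.
    - rewrite (RInt_antiderivative (fun e => r * e ^ 3 / 3)); [lra | lra | |].
      + intros e _; auto_derive; auto; field.
      + intros e _; continuous_by_derive; auto. }
  assert (Hbd : Rabs (osc_boundary t r th e0) <= r * e0 ^ 3 / 4).
  { eapply Rle_trans; [apply Rabs_osc_boundary_le; auto |].
    right; replace (r / (4 * t * e0)) with (r * / t / (4 * e0)) by (field; lra).
    rewrite Hinv_t; field; lra. }
  assert (Htail : / t * Rabs (LG - G) <= 3 / 4 * r * e0 ^ 3).
  { rewrite Rabs_minus_sym, Hinv_t.
    apply Rle_trans with (e0 ^ 4 * (3 * r / 4 / e0)).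
    - apply Rmult_le_compat_l; [apply pow_le; lra | apply LG_tail; auto].
    - right; field; lra. }
  assert (0 < / t) by (apply Rinv_0_lt_compat; lra).
  assert (0 < r * e0 ^ 3) by (apply Rmult_lt_0_compat; [lra | apply pow_lt; lra]).
  rewrite Hsplit.
  eapply Rle_trans; [apply Rabs_triang |].
  eapply Rle_trans; [apply Rplus_le_compat_r, Rabs_triang |].
  rewrite !Rabs_Ropp, Rabs_mult, (Rabs_right (/ t)) by lra.
  lra.
Qed.

End OscillatoryLimit.

Lemma Rpower_neg_three_halves t : 0 < t -> Rpower t (- (3 / 2)) = / (t * sqrt t).
Proof.
  intros Ht; rewrite Rpower_Ropp; replace (3 / 2) with (1 + / 2) by field.
  rewrite Rpower_plus, Rpower_1, Rpower_sqrt; auto.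
Qed.

Lemma Rpower_neg_quarter_pow t : 0 < t ->
  Rpower t (- (1 / 4)) ^ 4 * t = 1 /\ Rpower t (- (1 / 4)) ^ 3 = Rpower t (- (3 / 4)).
Proof.
  intros Ht; assert (He : 0 < Rpower t (- (1 / 4))) by apply exp_pos.
  rewrite <- !(Rpower_pow _ _ He), !Rpower_mult; split.
  - replace (- (1 / 4) * INR 4) with (Ropp 1) by (simpl; field).
    rewrite Rpower_Ropp, Rpower_1 by auto; field; lra.
  - f_equal; simpl; field.
Qed.

Lemma osc_integral t r th : 0 < t -> 0 < r -> exists L,
  filterlim (fun b => RInt (osc_integrand t r th) 0 b) (Rbar_locally p_infty) (locally L) /\
  Rabs L <= 28 * r * Rpower t (- (3 / 2)) /\ Rabs L <= 2 * r * Rpower t (- (3 / 4)).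
Proof.
  intros Ht Hr.
  destruct (osc_remainder_tail t r th Hr) as [LG HLG].
  exists (- / t * LG); split; [apply (osc_integral_filterlim t r th); auto | split].
  - eapply Rle_trans; [apply (osc_integral_le_large_time t r th); auto |].
    rewrite Rpower_neg_three_halves by auto.
    assert (0 < sqrt t) by (apply sqrt_lt_R0; lra).
    assert (sqrt t <= sqrt (2 * t)) by (apply sqrt_le_1_alt; lra).
    replace (28 * r * / (t * sqrt t)) with (28 * r / sqrt t / t) by (field; lra).
    unfold Rdiv; apply Rmult_le_compat_r; [apply Rlt_le, Rinv_0_lt_compat; lra |].
    apply Rmult_le_compat_l; [lra |]; apply Rinv_le_contravar; lra.
  - destruct (Rpower_neg_quarter_pow t Ht) as [H4 H3]; rewrite <- H3.
    apply (osc_integral_le_small_time t r th); auto; apply exp_pos.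
Qed.

Lemma dist3_pos (x y : R3) : x <> y -> 0 < dist3 x y.
Proof.
  destruct x as [[x1 x2] x3], y as [[y1 y2] y3]; intros Hne; unfold dist3.
  apply sqrt_lt_R0.
  pose proof (pow2_ge_0 (x1 - y1)); pose proof (pow2_ge_0 (x2 - y2)); pose proof (pow2_ge_0 (x3 - y3)).
  destruct (Req_dec x1 y1); [destruct (Req_dec x2 y2); [destruct (Req_dec x3 y3) |] |].
  - exfalso; apply Hne; subst; reflexivity.
  - assert (0 < (x3 - y3) ^ 2) by (apply pow2_gt_0; lra); lra.
  - assert (0 < (x2 - y2) ^ 2) by (apply pow2_gt_0; lra); lra.
  - assert (0 < (x1 - y1) ^ 2) by (apply pow2_gt_0; lra); lra.
Qed.

(* [R0 (4 e^3 + 2 e) = i e sin (e r) / (pi r)], so the real and imaginary parts of the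
   integrand are oscillatory integrands with phase shifts [-pi/2] and [0]. *)
Lemma integrand_components t x y e : dist3 x y <> 0 ->
  integrand t x y e
  = (/ (PI * dist3 x y) * osc_integrand t (dist3 x y) (- (PI / 2)) e,
     / (PI * dist3 x y) * osc_integrand t (dist3 x y) 0 e).
Proof.
  intros Hr; unfold integrand, R0ker, cexpi, osc_integrand; set (r := dist3 x y) in *.
  assert (PI <> 0) by apply PI_neq0.
  replace (t * (e ^ 4 + e ^ 2) + - (PI / 2)) with (t * (e ^ 4 + e ^ 2) - PI / 2) by ring.
  rewrite cos_sub_PI2, Rplus_0_r.
  unfold Cdiv, Cminus, Cplus, Copp, Cinv, RtoC, Cmult; cbn [fst snd].
  rewrite cos_neg, sin_neg, cos_neg, sin_neg.
  assert (0 < 1 + 2 * e ^ 2) by nra.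
  f_equal; field; repeat split; try lra; nra.
Qed.

Lemma Cmod_pair_le a b M : Rabs a <= M -> Rabs b <= M -> Cmod (a, b) <= 2 * M.
Proof.
  intros Ha Hb; unfold Cmod; cbn [fst snd].
  pose proof (Rabs_pos a); pose proof (Rabs_pos b).
  rewrite <- (sqrt_pow2 (2 * M)) by lra; apply sqrt_le_1_alt.
  rewrite <- (pow2_abs a), <- (pow2_abs b); nra.
Qed.

Lemma integrand_improper_integral t x y : 0 < t -> x <> y -> exists l,
  improper_integral_0_infty (integrand t x y) l /\
  Cmod l <= 56 / PI * Rpower t (- (3 / 2)) /\ Cmod l <= 4 / PI * Rpower t (- (3 / 4)).
Proof.
  intros Ht Hxy; pose proof (dist3_pos x y Hxy) as Hr; set (r := dist3 x y) in *.
  destruct (osc_integral t r (- (PI / 2)) Ht Hr) as [L1 [Hlim1 [Hlarge1 Hsmall1]]].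
  destruct (osc_integral t r 0 Ht Hr) as [L2 [Hlim2 [Hlarge2 Hsmall2]]].
  set (k := / (PI * r)).
  assert (Hscale : forall L c T, Rabs L <= c * r * T -> Rabs (k * L) <= c / PI * T).
  { intros L c T HL; pose proof PI_RGT_0.
    assert (0 < k) by (apply Rinv_0_lt_compat; nra).
    rewrite Rabs_mult, (Rabs_right k) by lra.
    replace (c / PI * T) with (k * (c * r * T)) by (unfold k; field; lra).
    apply Rmult_le_compat_l; lra. }
  exists (k * L1, k * L2); split; [| split].
  - unfold improper_integral_0_infty.
    apply (is_RInt_gen_ext (V := C_R_CompleteNormedModule) (Fa := at_point 0)
             (Fb := Rbar_locally p_infty)
             (fun e => (k * osc_integrand t r (- (PI / 2)) e, k * osc_integrand t r 0 e))).
    + apply filter_forall; intros; symmetry; apply integrand_components, Rgt_not_eq, Hr.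
    + apply (is_RInt_gen_pair (U := R_NormedModule) (V := R_NormedModule)
               (at_point 0) (Rbar_locally p_infty)).
      * apply (is_RInt_gen_scal _ k L1), is_RInt_gen_of_filterlim; auto.
        intros; apply ex_RInt_continuous_R, osc_integrand_continuous.
      * apply (is_RInt_gen_scal _ k L2), is_RInt_gen_of_filterlim; auto.
        intros; apply ex_RInt_continuous_R, osc_integrand_continuous.
  - replace (56 / PI) with (2 * (28 / PI)) by (field; apply PI_neq0).
    rewrite Rmult_assoc; apply Cmod_pair_le; apply Hscale; assumption.
  - replace (4 / PI) with (2 * (2 / PI)) by (field; apply PI_neq0).
    rewrite Rmult_assoc; apply Cmod_pair_le; apply Hscale; assumption.
Qed.

Theorem proposition2p1 :
  (exists C0 : R, 0 < C0 /\
     forall (t : R) (x y : R3), 1 < t -> x <> y ->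
       exists l : C, improper_integral_0_infty (integrand t x y) l /\
                     Cmod l <= C0 * Rpower t (- (3 / 2))) /\
  (exists C1 : R, 0 < C1 /\
     forall (t : R) (x y : R3), 0 < t <= 1 -> x <> y ->
       exists l : C, improper_integral_0_infty (integrand t x y) l /\
                     Cmod l <= C1 * Rpower t (- (3 / 4))).
Proof.
  pose proof PI_RGT_0.
  split; [exists (56 / PI) | exists (4 / PI)]; (split; [apply Rdiv_lt_0_compat; lra |]);
    intros t x y Ht Hxy; destruct (integrand_improper_integral t x y) as [l [Hl [Hlarge Hsmall]]];
    auto; try lra; exists l; auto.
Qed.
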